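(* Let $n\ge2$ and let $F$ be an exponential functor with character polynomial $F(t)=\sum_{i=0}^d\mu_it^i\in\mathbb{Q}[t]$. Let $G(t)\in\mathbb{Q}[t]$ be any polynomial with $G'(t)=\frac{F(t)-F(0)}{t}$ and set $V(t_1,\dots,t_n)=\sum_{i=1}^nG(t_i)$. Regard symmetric polynomials as polynomials in the elementary symmetric polynomials $\bar c_1,\dots,\bar c_n$. Then for every $j\in\{0,\dots,n-2\}$, \[ c_{F,j}=(-1)^{n-j}\frac{\partial V}{\partial\bar c_{n-(j+1)}},\qquad\text{where } c_{F,j}=\frac{q_j}{\Delta}. \] In particular these derivatives generate the ideal $J_{F,\mathbb{Q}}=(c_{F,0},\dots,c_{F,n-2})$ in $(R_F(\mathbb{T})\otimes\mathbb{Q})^W$.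
   Context: An exponential functor is a continuous symmetric monoidal functor $F$ from finite-dimensional complex inner product spaces (unitary isomorphisms, $\oplus$) to finite-dimensional complex inner product super-vector spaces (grading-preserving unitaries, graded $\otimes$ with Koszul sign symmetry), preserving duals, such that the $S^1$-representation on $F(\mathbb{C})$ has only positive characters. Its character polynomial is $F(t)=\sum_k(\dim F(\mathbb{C})^{(k)}_{\mathrm{even}}-\dim F(\mathbb{C})^{(k)}_{\mathrm{odd}})t^k$. $\bar c_k=\sum_{i_1<\dots<i_k}t_{i_1}\cdots t_{i_k}$; $\Delta=\det(t_j^{n-k})_{k,j}$ is the Vandermonde determinant; $q_j(t_1,\dots,t_n)$ is the determinant of the $n\times n$ matrix whose first row is $(F(t_1)t_1^j,\dots,F(t_n)t_n^j)$ and whose remaining rows are $(t_1^{n-2},\dots,t_n^{n-2}),\dots,(t_1,\dots,t_n),(1,\dots,1)$; $q_j/\Delta$ is a symmetric polynomial. $R_F(\mathbb{T})=\mathbb{Z}[t_1,\dots,t_n]/(t_1\cdots t_n-1)[F(t_1)^{-1},\dots,F(t_n)^{-1}]$ with $W=S_n$ permuting the variables. *)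

From mathcomp Require Import all_boot all_order all_algebra.
From mathcomp Require Import mpoly.
Unset Printing Implicit Defensive.
Import GRing.Theory.
Local Open Scope ring_scope.

Definition evalX (n : nat) (P : {poly rat}) (i : 'I_n) : {mpoly rat[n]} :=
  (map_poly (@mpolyC n rat) P).['X_i].

(* tuple of elementary symmetric polynomials (cbar_1, ..., cbar_n);
   the i-th entry (i : 'I_n) is cbar_{i+1} *)
Definition elemsyms (n : nat) : n.-tuple {mpoly rat[n]} :=
  [tuple mesym n rat i.+1 | i < n].

Definition vandermonde (n : nat) : {mpoly rat[n]} :=
  \det (\matrix_(r < n, c < n) ('X_c ^+ (n - 1 - r)) : 'M[{mpoly rat[n]}]_n).

Definition q_F (n : nat) (F : {poly rat}) (j : nat) : {mpoly rat[n]} :=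
  \det (\matrix_(r < n, c < n)
          (if r == 0 :> nat then evalX n F c * 'X_c ^+ j else 'X_c ^+ (n - 1 - r))
        : 'M[{mpoly rat[n]}]_n).

Definition Vpoly (n : nat) (G : {poly rat}) : {mpoly rat[n]} :=
  \sum_(i < n) evalX n G i.

(* Partial derivative with respect to the formal variable standing for cbar_k
   (k = 1..n) of a polynomial P in the formal variables cbar_1..cbar_n
   (variable i : 'I_n of P stands for cbar_{i+1}); zero for k out of range. *)
Definition dcbar (n : nat) (k : nat) (P : {mpoly rat[n]}) : {mpoly rat[n]} :=
  match @insub nat (fun m => m < n)%N 'I_n k.-1 with
  | Some i => if (0 < k)%N then mderiv i P else 0
  | None => 0
  end.

From mathcomp Require Import all_boot all_order all_algebra.
From mathcomp Require Import mpoly.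
From mathcomp Require Import zify ring.
Import GRing.Theory.
Local Open Scope ring_scope.

(* Write [e_k^(c)] for the k-th elementary symmetric polynomial in the
   variables other than [t_c], so that [cbar_(k+1) = e_(k+1)^(c) + t_c e_k^(c)]
   and [d cbar_(k+1) / d t_c = e_k^(c)].  By the chain rule
   [G'(t_c) = sum_k (dP/d cbar_(k+1)) e_k^(c)], hence
   [F(t_c) = F(0) + sum_k (dP/d cbar_(k+1)) t_c e_k^(c)].  Expanding [q_j]
   along its first row, the [F(0)] part has two equal rows, and the
   determinant [D(s,k)] with first row [t_c^s e_k^(c)] satisfies
   [D(s+1,k) = - D(s,k+1)] for [s < n-1], again because of a repeated row.
   Hence [D(j+1,k)] vanishes unless [j+1+k = n-1], where it equals
   [(-1)^k Delta]. *)

Section MesymOmit.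
Context {R : comNzRingType} {n : nat}.

Definition mesym_omit (i : 'I_n) (k : nat) : {mpoly R[n]} :=
  \sum_(h : {set 'I_n} | (#|h| == k) && (i \notin h)) \prod_(l in h) 'X_l.

Lemma mesymS_omit i k :
  mesym n R k.+1 = mesym_omit i k.+1 + 'X_i * mesym_omit i k.
Proof.
rewrite /mesym (bigID (fun h : {set 'I_n} => i \in h)) /= addrC; congr (_ + _).
rewrite (reindex_onto (fun h => i |: h) (fun h => h :\ i)); last first.
  by move=> h /andP[_ ih]; rewrite setD1K.
rewrite mulr_sumr; apply: eq_big => [h|h /andP[_ /eqP ih]].
  case: (boolP (i \in h)) => ih /=.
    have -> : ((i |: h) :\ i == h) = false.
      by apply/negbTE/eqP => E; move: ih; rewrite -E setD11.
    by rewrite !andbF.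
  by rewrite setU1K // cardsU1 ih setU11 eqxx !andbT add1n eqSS.
by rewrite big_setU1 //= -ih setD11.
Qed.

Lemma mesym_omit0 i : mesym_omit i 0 = 1.
Proof.
rewrite /mesym_omit (eq_bigl (pred1 set0)) ?big_pred1_eq ?big_set0 // => h.
by rewrite cards_eq0 /=; case: eqP => // ->; rewrite inE.
Qed.

Lemma mesym_omit_eq0 i k : (n <= k)%N -> mesym_omit i k = 0.
Proof.
move=> nk; rewrite /mesym_omit big_pred0 // => h.
apply/negbTE/andP => -[/eqP hk ih].
have /proper_card : h \proper [set: 'I_n].
  by rewrite properT; apply: contraNneq ih => ->; rewrite inE.
by rewrite cardsT card_ord hk ltnNge nk.
Qed.

Lemma mderivXU (i j : 'I_n) : mderiv j ('X_i : {mpoly R[n]}) = (i == j)%:R.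
Proof.
rewrite mderivX mnm1E; case: eqP => [<-|_]; last by rewrite scale0r.
by rewrite -[X in (X - _)%MM]add0m addmK mpolyX0 scale1r.
Qed.

Lemma mderiv_mesym_omit i k : mderiv i (mesym_omit i k) = 0.
Proof.
rewrite raddf_sum; apply: big1 => h /andP[_ ih].
apply: (big_ind (fun p => mderiv i p = 0)) => [||l lh].
- by rewrite -mpolyC1 mderivC.
- by move=> p q dp dq; rewrite mderivM dp dq mul0r mulr0 addr0.
by rewrite mderivXU; case: eqP lh ih => // -> ->.
Qed.

Lemma mderiv_mesymS i k : mderiv i (mesym n R k.+1) = mesym_omit i k.
Proof.
by rewrite (mesymS_omit i) mderivD mderivM !mderiv_mesym_omit mderivXU eqxx
  mulr0 addr0 add0r mul1r.
Qed.

End MesymOmit.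

Lemma mderiv_comp {R : comNzRingType} {n k : nat} (T : n.-tuple {mpoly R[k]})
    (i : 'I_k) (p : {mpoly R[n]}) :
  mderiv i (p \mPo T)
  = \sum_(l < n) (mderiv l p \mPo T) * mderiv i (tnth T l).
Proof.
pose chain q :=
  mderiv i (q \mPo T) = \sum_(l < n) (mderiv l q \mPo T) * mderiv i (tnth T l).
have chainD q r : chain q -> chain r -> chain (q + r).
  rewrite /chain comp_mpolyD mderivD => -> ->; rewrite -big_split.
  by apply: eq_bigr => l _; rewrite mderivD comp_mpolyD mulrDl.
have chainM q r : chain q -> chain r -> chain (q * r).
  rewrite /chain rmorphM mderivM => -> ->.
  rewrite mulr_suml mulr_sumr -big_split.
  by apply: eq_bigr => l _; rewrite mderivM rmorphD !rmorphM /=; ring.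
have chainC c : chain c%:MP.
  rewrite /chain comp_mpolyC mderivC big1 // => l _.
  by rewrite mderivC comp_mpoly0 mul0r.
have chainX j : chain 'X_j.
  rewrite /chain comp_mpolyXU -tnth_nth (bigD1 j) //= big1 ?addr0 => [|l].
    by rewrite mderivXU eqxx comp_mpoly1 mul1r.
  by rewrite mderivXU eq_sym => /negbTE->; rewrite comp_mpoly0 mul0r.
have chain1 : chain 1 by rewrite -mpolyC1; apply: chainC.
change (chain p); elim/mpolyind: p => [|c m p _ _ hp].
  by rewrite -mpolyC0; apply: chainC.
apply: (chainD _ _ _ hp); rewrite -mul_mpolyC mpolyXE_id.
apply: (chainM _ _ (chainC c)); apply: (big_ind chain chain1 chainM) => l _.
elim: (m l) => [|e ih]; first by rewrite expr0; exact: chain1.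
by rewrite exprS; exact: chainM _ _ (chainX l) ih.
Qed.

Lemma mderiv_comp_mesym {R : comNzRingType} {n : nat}
    (p : {mpoly R[n]}) (c : 'I_n) :
  mderiv c (p \mPo [tuple mesym n R i.+1 | i < n])
  = \sum_(k < n) (mderiv k p \mPo [tuple mesym n R i.+1 | i < n]) * mesym_omit c k.
Proof.
by rewrite mderiv_comp; apply: eq_bigr => k _; rewrite tnth_mktuple mderiv_mesymS.
Qed.

Lemma mderiv_horner_X {R : comNzRingType} {n : nat} (P : {poly R}) (i j : 'I_n) :
  mderiv j (map_poly (@mpolyC n R) P).['X_i]
  = (i == j)%:R * (map_poly (@mpolyC n R) P^`()).['X_i].
Proof.
elim/poly_ind: P => [|P c ih].
  by rewrite deriv0 !rmorph0 horner0 mderiv0 mulr0.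
rewrite derivD derivC addr0 derivM derivX mulr1 !rmorphD !rmorphM /=.
rewrite !map_polyX !map_polyC !(hornerD, hornerM, hornerX, hornerC).
by rewrite mderivD mderivC addr0 mderivM ih mderivXU; ring.
Qed.

Lemma mderiv_Vpoly {n : nat} (G : {poly rat}) (j : 'I_n) :
  mderiv j (Vpoly n G) = evalX n G^`() j.
Proof.
rewrite raddf_sum (bigD1 j) //= big1 ?addr0 => [|i /negbTE ij].
  by rewrite mderiv_horner_X eqxx mul1r.
by rewrite mderiv_horner_X ij mul0r.
Qed.

Section TopRowDeterminant.
Context {R : comNzRingType} {n : nat}.
Implicit Types f g : 'I_n.+1 -> {mpoly R[n.+1]}.

Definition top_row_mx f : 'M[{mpoly R[n.+1]}]_n.+1 :=
  \matrix_(r, c) if r == 0 :> nat then f c else 'X_c ^+ (n - r).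

Definition top_row_det f := \det (top_row_mx f).

Lemma top_row_detE f :
  top_row_det f = \sum_c f c * cofactor (top_row_mx (fun _ => 0)) 0 c.
Proof.
rewrite /top_row_det (expand_det_row _ 0); apply: eq_bigr => c _.
rewrite mxE /=; congr (_ * (_ * \det _)); apply/matrixP => r c'.
by rewrite !mxE.
Qed.

Lemma eq_top_row_det f g : f =1 g -> top_row_det f = top_row_det g.
Proof. by move=> fg; rewrite !top_row_detE; apply: eq_bigr => c _; rewrite fg. Qed.

Lemma top_row_detD f g :
  top_row_det (fun c => f c + g c) = top_row_det f + top_row_det g.
Proof.
by rewrite !top_row_detE -big_split; apply: eq_bigr => c _; rewrite mulrDl.
Qed.

Lemma top_row_detMl a f : top_row_det (fun c => a * f c) = a * top_row_det f.
Proof.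
by rewrite !top_row_detE mulr_sumr; apply: eq_bigr => c _; rewrite mulrA.
Qed.

Lemma top_row_det_sum (I : finType) (F : I -> 'I_n.+1 -> {mpoly R[n.+1]}) :
  top_row_det (fun c => \sum_x F x c) = \sum_x top_row_det (F x).
Proof.
rewrite top_row_detE; under eq_bigr do rewrite mulr_suml.
by rewrite exchange_big; apply: eq_bigr => x _; rewrite top_row_detE.
Qed.

Definition pow_det a := top_row_det (fun c => 'X_c ^+ a).

Definition omit_det s k := top_row_det (fun c => 'X_c ^+ s * mesym_omit c k).

Lemma pow_det_eq0 a : (a < n)%N -> pow_det a = 0.
Proof.
move=> an; have lt : (n - a < n.+1)%N by lia.
apply: (determinant_alternate (i1 := 0) (i2 := Ordinal lt)) => [|c].
  by rewrite -val_eqE /=; lia.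
by rewrite !mxE /= subn_eq0 leqNgt an /= subKn // ltnW.
Qed.

Lemma omit_detS s k : (s < n)%N -> omit_det s.+1 k = - omit_det s k.+1.
Proof.
move=> sn; apply/eqP; rewrite -addr_eq0 addrC.
have -> : omit_det s k.+1 + omit_det s.+1 k = mesym n.+1 R k.+1 * pow_det s.
  rewrite /omit_det /pow_det -top_row_detMl -top_row_detD.
  by apply: eq_top_row_det => c; rewrite (mesymS_omit c) exprS; ring.
by rewrite pow_det_eq0 ?mulr0.
Qed.

Lemma omit_det_low s k :
  (s + k <= n)%N -> omit_det s k = (-1) ^+ k * pow_det (s + k)%N.
Proof.
elim: k s => [|k ih] s skn.
  by rewrite mul1r addn0; apply: eq_top_row_det => c; rewrite mesym_omit0 mulr1.
have sn : (s < n)%N by rewrite -addn1 (leq_trans _ skn) // leq_add2l.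
rewrite -[omit_det s _]opprK -omit_detS // (ih s.+1) addSnnS //.
by rewrite exprS mulN1r mulNr.
Qed.

Lemma omit_det_high s k :
  (s <= n)%N -> omit_det s k = (-1) ^+ s * omit_det 0 (s + k)%N.
Proof.
elim: s k => [|s ih] k sn; first by rewrite mul1r.
by rewrite omit_detS // ih ?addSnnS ?(ltnW sn) // exprS mulN1r mulNr.
Qed.

Lemma omit_detE s k : (s <= n)%N ->
  omit_det s k = if (s + k == n)%N then (-1) ^+ k * pow_det n else 0.
Proof.
move=> sn; case: ltngtP => [lt|gt|eq]; last by rewrite omit_det_low eq.
  by rewrite omit_det_low ?(ltnW lt) // pow_det_eq0 ?mulr0.
rewrite omit_det_high // /omit_det top_row_detE big1 ?mulr0 // => c _.
by rewrite mesym_omit_eq0 ?mulr0 ?mul0r.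
Qed.

Lemma top_row_det_sum_omit (a : 'I_n.+1 -> {mpoly R[n.+1]}) s (k0 : 'I_n.+1) :
  (s + k0 = n)%N ->
  top_row_det (fun c => \sum_k a k * ('X_c ^+ s * mesym_omit c k))
  = (-1) ^+ k0 * a k0 * pow_det n.
Proof.
move=> sk0; have sn : (s <= n)%N by rewrite -sk0 leq_addr.
rewrite top_row_det_sum (bigD1 k0) //= big1 => [|k kk0];
  rewrite top_row_detMl -/(omit_det _ _) omit_detE //.
  by rewrite sk0 eqxx addr0 mulrCA mulrA.
have -> : (s + k == n)%N = false.
  by apply: contraNF kk0 => /eqP skn; rewrite -val_eqE -(eqn_add2l s) skn sk0.
by rewrite mulr0.
Qed.

End TopRowDeterminant.

Lemma vandermonde_pow_det {n : nat} : vandermonde n.+1 = pow_det n.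
Proof.
congr (\det _); apply/matrixP => r c; rewrite !mxE subn1 /=.
by case: ifP => // /eqP ->; rewrite subn0.
Qed.

Lemma q_F_top_row_det {n : nat} (F : {poly rat}) (j : nat) :
  q_F n.+1 F j = top_row_det (fun c => evalX n.+1 F c * 'X_c ^+ j).
Proof. by congr (\det _); apply/matrixP => r c; rewrite !mxE subn1. Qed.

Lemma dcbarS {n : nat} (i : 'I_n) (P : {mpoly rat[n]}) :
  dcbar n i.+1 P = mderiv i P.
Proof. by rewrite /dcbar /= valK. Qed.

Lemma evalX_F_chain {n : nat} {F G : {poly rat}} {P : {mpoly rat[n]}}
    (c : 'I_n) :
  G^`() * 'X = F - (F.[0])%:P -> P \mPo elemsyms n = Vpoly n G ->
  evalX n F c
  = (F.[0])%:MP + 'X_c * \sum_k (mderiv k P \mPo elemsyms n) * mesym_omit c k.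
Proof.
move=> /(congr1 (fun Q => evalX n Q c)) hG hP.
rewrite -(mderiv_comp_mesym P c) -/(elemsyms n) hP mderiv_Vpoly.
move: hG; rewrite /evalX !(rmorphM, rmorphB) /= hornerM hornerD hornerN.
rewrite map_polyX map_polyC hornerX hornerC => E.
by apply/eqP; rewrite addrC -subr_eq -E mulrC.
Qed.

Theorem proposition4p1 (n : nat) (F G : {poly rat}) :
  (2 <= n)%N ->
  G^`() * 'X = F - (F.[0])%:P ->
  forall P : {mpoly rat[n]},
    P \mPo elemsyms n = Vpoly n G ->
    forall j : nat, (j <= n - 2)%N ->
      q_F n F j
      = vandermonde n
        * ((-1) ^+ (n - j) * (dcbar n (n - j.+1) P \mPo elemsyms n)).
Proof.
case: n => [//|n] n2 hG P hP j hj.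
have k0_lt : (n - j.+1 < n.+1)%N by lia.
pose k0 := Ordinal k0_lt.
have expand_top_row : top_row_det (fun c => evalX n.+1 F c * 'X_c ^+ j)
    = top_row_det (fun c => (F.[0])%:MP * 'X_c ^+ j
        + \sum_k (mderiv k P \mPo elemsyms n.+1) * ('X_c ^+ j.+1 * mesym_omit c k)).
  apply: eq_top_row_det => c; rewrite (evalX_F_chain c hG hP) mulrDl.
  congr (_ + _); rewrite mulr_sumr mulr_suml; apply: eq_bigr => k _.
  by rewrite exprS; ring.
rewrite q_F_top_row_det expand_top_row top_row_detD top_row_detMl.
rewrite -/(pow_det _) pow_det_eq0 ?mulr0 ?add0r; last by lia.
rewrite (top_row_det_sum_omit _ j.+1 k0) /=; last by lia.
have -> : (n.+1 - j.+1 = k0.+1)%N by rewrite /= subSS; lia.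
rewrite dcbarS vandermonde_pow_det.
have -> : (n.+1 - j = k0 + 2)%N by rewrite /=; lia.
by rewrite exprD sqrrN expr1n mulr1; ring.
Qed.
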